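(* Let $\varphi$ be an LTL formula over $2^{V_i}$ and let $\mathcal{A}_\varphi$ be an ACA with $\mathcal{L}(\mathcal{A}_\varphi)=\mathcal{L}(\varphi)$. If there exists a strategy for process $p_i$ that is winning for $\varphi$ (i.e. $\varphi$ is realizable by $p_i$), then every strategy for $p_i$ that is delay-dominant for $\mathcal{A}_\varphi$ is winning for $\varphi$.
   Context: Automata. For a finite set $\Sigma$ of atomic propositions, an alternating co-Büchi automaton (ACA) over $2^\Sigma$ is a tuple $\mathcal{A}=(Q,q_0,\delta,F)$ with a finite set of states $Q$, initial state $q_0\in Q$, set of rejecting states $F\subseteq Q$, and transition function $\delta:Q\times 2^\Sigma\to\mathbb{B}^+(Q)$ into positive Boolean formulas over $Q$ given in disjunctive normal form; $\delta(q,a)$ is identified with the set of its disjuncts, each disjunct $c\in\delta(q,a)$ being a set of states. A run tree of $\mathcal{A}$ on $\sigma=\sigma_0\sigma_1\cdots\in(2^\Sigma)^\omega$ is a $Q$-labeled tree $(T,\ell)$ ($T\subseteq\mathbb{N}^*$ prefix-closed) with $\ell(\varepsilon)=q_0$ and $\{\ell(x')\mid x'\text{ a child of }x\}\in\delta(\ell(x),\sigma_{|x|})$ for every node $x$; it is accepting if every infinite branch visits $F$ only finitely often. $\mathcal{A}$ accepts $\sigma$ if some run tree on $\sigma$ is accepting; $\mathcal{L}(\mathcal{A})$ is the set of accepted words. For an LTL formula $\varphi$, $\mathcal{L}(\varphi)$ is the set of infinite words satisfying $\varphi$. (As implicit in the game below, each $\delta(q,a)$ and each of its disjuncts is nonempty.)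 Processes and strategies. A process $p_i$ has disjoint finite sets $I_i$ of input and $O_i$ of output variables; $V_i=I_i\cup O_i$. A strategy for $p_i$ is a function $s:(2^{I_i})^*\to 2^{O_i}$ representable by a finite Moore machine. For $\gamma\in(2^{I_i})^\omega$ the computation $\mathrm{comp}(s,\gamma)\in(2^{V_i})^\omega$ is given by $\mathrm{comp}(s,\gamma)_j=\gamma_j\cup s(\gamma_0\cdots\gamma_{j-1})$ for all $j\ge 0$. A strategy $s$ for $p_i$ is winning for $\varphi$ if $\mathrm{comp}(s,\gamma)\models\varphi$ for all $\gamma\in(2^{I_i})^\omega$. Delay-dominance game. Let $\mathcal{A}=(Q,q_0,\delta,F)$ be an ACA and $\sigma,\sigma'$ infinite words over its alphabet. The game $(\mathcal{A},\sigma,\sigma')$ is played between Duplicator (Player 0) and Spoiler (Player 1) on positions of the forms $((p,q),j)$ and $((p,q,c,c'),j)$ (owned by Spoiler) and $((p,q,c),j)$ and $((p,q,c,q'),j)$ (owned by Duplicator), with $p,q,q'\in Q$, $c,c'\subseteq Q$, $j\in\mathbb{N}$. Moves: from $((p,q),j)$ to $((p,q,c),j)$ with $c\in\delta(p,\sigma_j)$; from $((p,q,c),j)$ to $((p,q,c,c'),j)$ with $c'\in\delta(q,\sigma'_j)$; from $((p,q,c,c'),j)$ to $((p,q,c,q'),j)$ with $q'\in c'$; from $((p,q,c,q'),j)$ to $((p',q'),j+1)$ with $p'\in c$. The initial position is $((q_0,q_0),0)$. For a position whose state tuple is $(p,q)$, $(p,q,c)$, $(p,q,c,c')$ or $(p,q,c,q')$,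 its alternative state is $p$ and its dominant state is $q$. A play $\rho_0\rho_1\cdots$ is won by Duplicator iff for every $k$ such that the dominant state of $\rho_k$ lies in $F$ there is $k'\ge k$ such that the alternative state of $\rho_{k'}$ lies in $F$. A strategy of a player maps finite play prefixes ending in one of its positions to a legal successor; a Duplicator strategy is winning if every play from the initial position consistent with it is won by Duplicator. Delay-dominance. For strategies $s,t$ of $p_i$, an ACA $\mathcal{A}$ over $2^{V_i}$ and $\gamma\in(2^{I_i})^\omega$: $s$ delay-dominates $t$ on $\gamma$ if Duplicator has a winning strategy in $(\mathcal{A},\mathrm{comp}(t,\gamma),\mathrm{comp}(s,\gamma))$; $s$ delay-dominates $t$ if this holds for all $\gamma$; $s$ is delay-dominant for $\mathcal{A}$ (and $p_i$) if it delay-dominates every strategy $t$ for $p_i$. *)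

From mathcomp Require Import all_boot.
Set Implicit Arguments.
Unset Strict Implicit.
Unset Printing Implicit Defensive.

Definition word (AP : finType) := nat -> {set AP}.

Inductive ltl (AP : finType) : Type :=
| LTrue : ltl AP
| LAtom : AP -> ltl AP
| LNot : ltl AP -> ltl AP
| LAnd : ltl AP -> ltl AP -> ltl AP
| LNext : ltl AP -> ltl AP
| LUntil : ltl AP -> ltl AP -> ltl AP.

Fixpoint ltl_holds (AP : finType) (w : word AP) (i : nat) (f : ltl AP) : Prop :=
  match f with
  | LTrue => True
  | LAtom a => a \in w i
  | LNot g => ~ ltl_holds w i g
  | LAnd g h => ltl_holds w i g /\ ltl_holds w i h
  | LNext g => ltl_holds w i.+1 g
  | LUntil g h => exists k, i <= k /\ ltl_holds w k h /\
                    forall m, i <= m -> m < k -> ltl_holds w m g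
  end.

Definition ltl_sat (AP : finType) (w : word AP) (f : ltl AP) : Prop :=
  ltl_holds w 0 f.

(* An ACA over 2^AP is given by a finite state type Q, an initial state q0,
   a transition function delta (each delta q a is the set of its DNF
   disjuncts, each a set of states) and the set F of rejecting states. *)

(* Well-formedness implicit in the paper: every delta q a and each of its
   disjuncts is nonempty. *)
Definition aca_wf (AP Q : finType) (delta : Q -> {set AP} -> {set {set Q}}) :=
  forall q a, delta q a != set0 /\ forall c, c \in delta q a -> c != set0.

Definition run_tree (AP Q : finType) (q0 : Q)
  (delta : Q -> {set AP} -> {set {set Q}}) (sigma : word AP)
  (T : seq nat -> Prop) (l : seq nat -> Q) : Prop :=
  [/\ T [::],
      (forall x n, T (rcons x n) -> T x),
      l [::] = q0 &
      forall x, T x ->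
        exists2 c, c \in delta (l x) (sigma (size x)) &
          forall q, q \in c <-> exists n, T (rcons x n) /\ l (rcons x n) = q].

Definition branch_node (b : nat -> nat) (k : nat) : seq nat := mkseq b k.

Definition run_accepting (Q : finType) (F : {set Q})
  (T : seq nat -> Prop) (l : seq nat -> Q) : Prop :=
  forall b : nat -> nat, (forall k, T (branch_node b k)) ->
    exists N, forall k, N <= k -> l (branch_node b k) \notin F.

Definition aca_accepts (AP Q : finType) (q0 : Q)
  (delta : Q -> {set AP} -> {set {set Q}}) (F : {set Q}) (sigma : word AP) : Prop :=
  exists T l, run_tree q0 delta sigma T l /\ run_accepting F T l.

(* Process p_i with input variables I and output variables O (disjoint,
   realised as the two summands); V_i = (I + O)%type. *)

Definition in_letter (I O : finType) (g : {set I}) : {set (I + O)%type} := inl @: g.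
Definition out_letter (I O : finType) (o : {set O}) : {set (I + O)%type} := inr @: o.

Definition finite_state (I O : finType) (s : seq {set I} -> {set O}) : Prop :=
  exists (n : nat) (m0 : 'I_n) (tr : 'I_n -> {set I} -> 'I_n)
         (out : 'I_n -> {set O}),
    forall w, s w = out (foldl tr m0 w).

Definition prefix (A : Type) (g : nat -> A) (j : nat) : seq A := mkseq g j.

Definition comp (I O : finType) (s : seq {set I} -> {set O})
  (gamma : nat -> {set I}) : word ((I + O)%type) :=
  fun j => in_letter O (gamma j) :|: out_letter I (s (prefix gamma j)).

Definition winning (I O : finType) (phi : ltl ((I + O)%type))
  (s : seq {set I} -> {set O}) : Prop :=
  forall gamma : nat -> {set I}, ltl_sat (comp s gamma) phi.

Inductive pos (Q : finType) : Type :=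
| PosA : Q -> Q -> nat -> pos Q
| PosB : Q -> Q -> {set Q} -> nat -> pos Q
| PosC : Q -> Q -> {set Q} -> {set Q} -> nat -> pos Q
| PosD : Q -> Q -> {set Q} -> Q -> nat -> pos Q.

Definition dup_owned (Q : finType) (x : pos Q) : bool :=
  match x with PosB _ _ _ _ | PosD _ _ _ _ _ => true | _ => false end.

Definition alt_state (Q : finType) (x : pos Q) : Q :=
  match x with
  | PosA p _ _ | PosB p _ _ _ | PosC p _ _ _ _ | PosD p _ _ _ _ => p end.

Definition dom_state (Q : finType) (x : pos Q) : Q :=
  match x with
  | PosA _ q _ | PosB _ q _ _ | PosC _ q _ _ _ | PosD _ q _ _ _ => q end.

Definition game_move (AP Q : finType) (delta : Q -> {set AP} -> {set {set Q}})
  (sigma sigma' : word AP) (x y : pos Q) : Prop :=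
  match x, y with
  | PosA p q j, PosB p1 q1 c j1 =>
      [/\ p1 = p, q1 = q, j1 = j & c \in delta p (sigma j)]
  | PosB p q c j, PosC p1 q1 c1 c' j1 =>
      [/\ p1 = p, q1 = q, c1 = c, j1 = j & c' \in delta q (sigma' j)]
  | PosC p q c c' j, PosD p1 q1 c1 q' j1 =>
      [/\ p1 = p, q1 = q, c1 = c, j1 = j & q' \in c']
  | PosD p q c q' j, PosA p' q1 j1 =>
      [/\ q1 = q', j1 = j.+1 & p' \in c]
  | _, _ => False
  end.

Definition init_pos (Q : finType) (q0 : Q) : pos Q := PosA q0 q0 0.

Definition play_prefix (AP Q : finType) (q0 : Q)
  (delta : Q -> {set AP} -> {set {set Q}}) (sigma sigma' : word AP)
  (h : seq (pos Q)) : Prop :=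
  h <> [::] /\ head (init_pos q0) h = init_pos q0 /\
  forall i, i.+1 < size h ->
    game_move delta sigma sigma' (nth (init_pos q0) h i) (nth (init_pos q0) h i.+1).

Definition is_play (AP Q : finType) (q0 : Q)
  (delta : Q -> {set AP} -> {set {set Q}}) (sigma sigma' : word AP)
  (rho : nat -> pos Q) : Prop :=
  rho 0 = init_pos q0 /\ forall k, game_move delta sigma sigma' (rho k) (rho k.+1).

Definition dup_wins_play (Q : finType) (F : {set Q}) (rho : nat -> pos Q) : Prop :=
  forall k, dom_state (rho k) \in F ->
    exists2 k', k <= k' & alt_state (rho k') \in F.

Definition dup_strategy (AP Q : finType) (q0 : Q)
  (delta : Q -> {set AP} -> {set {set Q}}) (sigma sigma' : word AP)
  (f : seq (pos Q) -> pos Q) : Prop :=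
  forall h, play_prefix q0 delta sigma sigma' h ->
    dup_owned (last (init_pos q0) h) ->
    game_move delta sigma sigma' (last (init_pos q0) h) (f h).

Definition consistent (Q : finType) (f : seq (pos Q) -> pos Q)
  (rho : nat -> pos Q) : Prop :=
  forall k, dup_owned (rho k) -> rho k.+1 = f (mkseq rho k.+1).

Definition dup_wins_game (AP Q : finType) (q0 : Q)
  (delta : Q -> {set AP} -> {set {set Q}}) (F : {set Q})
  (sigma sigma' : word AP) : Prop :=
  exists f, dup_strategy q0 delta sigma sigma' f /\
    forall rho, is_play q0 delta sigma sigma' rho -> consistent f rho ->
      dup_wins_play F rho.

Definition delay_dominates (I O Q : finType) (q0 : Q)
  (delta : Q -> {set (I + O)%type} -> {set {set Q}}) (F : {set Q})
  (s t : seq {set I} -> {set O}) : Prop :=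
  forall gamma : nat -> {set I},
    dup_wins_game q0 delta F (comp t gamma) (comp s gamma).

Definition delay_dominant (I O Q : finType) (q0 : Q)
  (delta : Q -> {set (I + O)%type} -> {set {set Q}}) (F : {set Q})
  (s : seq {set I} -> {set O}) : Prop :=
  forall t, finite_state t -> delay_dominates q0 delta F s t.

(* Delay-dominance is a simulation of accepting runs: from an accepting run
   tree of the automaton on comp(t, gamma) and a winning Duplicator strategy
   in the game (A, comp(t, gamma), comp(s, gamma)), build a run tree on
   comp(s, gamma).  Spoiler is made to play the disjuncts of the given run
   tree and to descend along its branches, while the new tree records
   Duplicator's answers; every branch of the new tree is then a play
   consistent with the winning strategy, so a rejecting state visited on it
   infinitely often would be matched by infinitely many rejecting states on
   a branch of the given accepting tree.  With t winning for phi and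
   L(A) = L(phi), every delay-dominant s is therefore winning as well. *)

From Stdlib Require Import ClassicalEpsilon.
From mathcomp Require Import all_boot zify.

Set Implicit Arguments.
Unset Strict Implicit.
Unset Printing Implicit Defensive.

Definition classicb (P : Prop) : bool :=
  if excluded_middle_informative P then true else false.

Lemma classicbP (P : Prop) : reflect P (classicb P).
Proof. by rewrite /classicb; case: excluded_middle_informative => HP; constructor. Qed.

Section PlayPrefixes.

Variables (AP Q : finType) (q0 : Q) (delta : Q -> {set AP} -> {set {set Q}}).
Variables (sigma sigma' : word AP) (f : seq (pos Q) -> pos Q).

Local Notation ip := (init_pos q0).

Definition prefix_consistent (h : seq (pos Q)) : Prop :=
  forall i, i.+1 < size h -> dup_owned (nth ip h i) -> nth ip h i.+1 = f (take i.+1 h).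

Lemma play_prefix_rcons h x :
  play_prefix q0 delta sigma sigma' h ->
  game_move delta sigma sigma' (last ip h) x ->
  play_prefix q0 delta sigma sigma' (rcons h x).
Proof.
case=> h_nil [h_head h_moves] h_last; split; first by case: (h) h_nil.
split; first by case: (h) h_nil h_head.
move=> i; rewrite size_rcons ltnS => hi; rewrite !nth_rcons.
case: (ltnP i.+1 (size h)) => hi1; first by rewrite (ltnW hi1); apply: h_moves.
have ei : i.+1 = size h by apply/eqP; rewrite eqn_leq hi hi1.
rewrite -ei ltnSn eqxx.
by have -> : nth ip h i = last ip h by rewrite -nth_last -ei.
Qed.

Lemma prefix_consistent_rcons h x :
  h <> [::] -> prefix_consistent h -> (dup_owned (last ip h) -> x = f h) ->
  prefix_consistent (rcons h x).
Proof.
move=> h_nil h_cons h_last i; rewrite size_rcons ltnS => hi; rewrite !nth_rcons.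
case: (ltnP i.+1 (size h)) => hi1.
  by rewrite (ltnW hi1) => owned; rewrite h_cons // -cats1 takel_cat.
have ei : i.+1 = size h by apply/eqP; rewrite eqn_leq hi hi1.
rewrite -ei ltnSn eqxx => owned; rewrite ei -cats1 take_size_cat //.
by apply: h_last; rewrite -nth_last -ei.
Qed.

End PlayPrefixes.

Section Simulation.

Variables (AP Q : finType) (q0 : Q) (delta : Q -> {set AP} -> {set {set Q}}).
Variables (F : {set Q}) (sigma sigma' : word AP).
Variables (T : seq nat -> Prop) (l : seq nat -> Q) (f : seq (pos Q) -> pos Q).
Hypothesis run_T : run_tree q0 delta sigma T l.
Hypothesis accepting_T : run_accepting F T l.
Hypothesis f_strategy : dup_strategy q0 delta sigma sigma' f.
Hypothesis f_winning : forall rho, is_play q0 delta sigma sigma' rho ->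
  consistent f rho -> dup_wins_play F rho.

Local Notation ip := (init_pos q0).
Local Notation play_prefix := (play_prefix q0 delta sigma sigma').

Definition children (y : seq nat) : {set Q} :=
  [set q | classicb (exists n, T (rcons y n) /\ l (rcons y n) = q)].

Lemma children_delta y : T y -> children y \in delta (l y) (sigma (size y)).
Proof.
case: run_T => _ _ _ disjunct /disjunct [c c_delta c_children].
suff -> : children y = c by [].
by apply/setP => q; rewrite inE; apply/classicbP/idP => /c_children.
Qed.

Definition dom_disjunct (x : pos Q) : {set Q} :=
  if x is PosC _ _ _ c' _ then c' else set0.

(* A child of the new tree is a natural number encoding the pair (q', m) of
   Spoiler's choice q' in c' and the index m of the matching child in T. *)
Definition decode_state (q : Q) (n : nat) : Q :=
  if @unpickle (Q * nat)%type n is Some (q', _) then q' else q.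
Definition decode_index (n : nat) : nat :=
  if @unpickle (Q * nat)%type n is Some (_, m) then m else 0.

Definition play_disjunct (h : seq (pos Q)) (y : seq nat) : seq (pos Q) :=
  rcons h (PosB (alt_state (last ip h)) (dom_state (last ip h)) (children y) (size y)).

Definition play_state (h : seq (pos Q)) (y : seq nat) (q' : Q) : seq (pos Q) :=
  rcons (rcons (play_disjunct h y) (f (play_disjunct h y)))
    (PosD (alt_state (last ip h)) (dom_state (last ip h)) (children y) q' (size y)).

Definition play_round (h : seq (pos Q)) (y : seq nat) (q' : Q) : seq (pos Q) :=
  rcons (play_state h y q') (f (play_state h y q')).

Section Round.

Variables (h : seq (pos Q)) (y : seq nat) (q : Q).
Hypotheses (h_play : play_prefix h) (h_cons : prefix_consistent q0 f h).
Hypotheses (y_node : T y) (h_last : last ip h = PosA (l y) q (size y)).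

Let h_nil : h <> [::]. Proof. by case: h_play. Qed.

Let disjunct_play : play_prefix (play_disjunct h y).
Proof.
rewrite /play_disjunct h_last; apply: play_prefix_rcons => //.
by rewrite h_last; split => //; apply: children_delta.
Qed.

Let disjunct_cons : prefix_consistent q0 f (play_disjunct h y).
Proof. by apply: prefix_consistent_rcons => //; rewrite h_last. Qed.

Let last_disjunct : last ip (play_disjunct h y) = PosB (l y) q (children y) (size y).
Proof. by rewrite /play_disjunct last_rcons h_last. Qed.

Lemma dup_disjunct_reply :
  exists2 c', f (play_disjunct h y) = PosC (l y) q (children y) c' (size y)
            & c' \in delta q (sigma' (size y)).
Proof.
have := f_strategy disjunct_play; rewrite last_disjunct => /(_ isT).
case: (f _) => [||p1 q1 c1 c' j1|] //= [-> -> -> -> c'_delta].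
by exists c'.
Qed.

Lemma dup_state_reply c' q' :
  f (play_disjunct h y) = PosC (l y) q (children y) c' (size y) -> q' \in c' ->
  [/\ play_prefix (play_round h y q'), prefix_consistent q0 f (play_round h y q')
    & exists2 p', f (play_state h y q') = PosA p' q' (size y).+1 & p' \in children y].
Proof.
move=> f_disjunct q'_c'.
have disjunct_move :
    game_move delta sigma sigma' (last ip (play_disjunct h y)) (f (play_disjunct h y)).
  by apply: f_strategy; rewrite ?last_disjunct.
have reply_nil : rcons (play_disjunct h y) (f (play_disjunct h y)) <> [::].
  by case: (play_disjunct h y).
have state_play : play_prefix (play_state h y q').
  rewrite /play_state h_last /=.
  apply: play_prefix_rcons; last by rewrite last_rcons f_disjunct.
  exact: play_prefix_rcons.
have state_cons : prefix_consistent q0 f (play_state h y q').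
  rewrite /play_state h_last /=.
  apply: prefix_consistent_rcons => //; last by rewrite last_rcons f_disjunct.
  by apply: prefix_consistent_rcons => //; rewrite /play_disjunct; case: (h).
have state_last : last ip (play_state h y q') = PosD (l y) q (children y) q' (size y).
  by rewrite /play_state last_rcons h_last.
have state_nil : play_state h y q' <> [::] by move/(congr1 size); rewrite size_rcons.
have := f_strategy state_play; rewrite state_last => /(_ isT).
case f_state: (f (play_state h y q')) => [p' q1 j1|||] //= [eq_q eq_j p'_children].
subst q1 j1.
split; last by exists p'.
- by apply: play_prefix_rcons => //; rewrite state_last f_state.
- by apply: prefix_consistent_rcons => //; rewrite f_state.
Qed.

End Round.

Record sim_state := SimState { sim_play : seq (pos Q); sim_node : seq nat; sim_valid : bool }.

(* One round of the game per level of the new tree: Spoiler offers the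
   disjunct [children y], Duplicator answers c', Spoiler picks the encoded
   q', Duplicator answers p'; the node is valid while q' is in c' and p'
   labels the encoded child of y in T. *)
Definition sim_step (s : sim_state) (n : nat) : sim_state :=
  let: SimState h y valid := s in
  let q' := decode_state (dom_state (last ip h)) n in
  let m := decode_index n in
  SimState (play_round h y q') (rcons y m)
    [&& valid, q' \in dom_disjunct (f (play_disjunct h y)), classicb (T (rcons y m))
      & l (rcons y m) == alt_state (f (play_state h y q'))].

Definition sim_run (x : seq nat) : sim_state := foldl sim_step (SimState [:: ip] [::] true) x.

Lemma sim_run_rcons x n : sim_run (rcons x n) = sim_step (sim_run x) n.
Proof. by rewrite /sim_run foldl_rcons. Qed.

Lemma sim_node_run x : sim_node (sim_run x) = map decode_index x.
Proof.
elim/last_ind: x => [//|x n IH]; rewrite sim_run_rcons map_rcons -IH.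
by case: (sim_run x).
Qed.

Lemma size_sim_play x : size (sim_play (sim_run x)) = 4 * size x + 1.
Proof.
elim/last_ind: x => [//|x n IH]; rewrite sim_run_rcons size_rcons.
case: (sim_run x) IH => h y valid /= IH.
by rewrite /play_round /play_state /play_disjunct !size_rcons IH; lia.
Qed.

Lemma sim_valid_rcons x n : sim_valid (sim_run (rcons x n)) -> sim_valid (sim_run x).
Proof. by rewrite sim_run_rcons; case: (sim_run x) => h y valid /= /and4P []. Qed.

Definition sim_invariant (s : sim_state) : Prop :=
  [/\ play_prefix (sim_play s), prefix_consistent q0 f (sim_play s), T (sim_node s)
    & last ip (sim_play s)
      = PosA (l (sim_node s)) (dom_state (last ip (sim_play s))) (size (sim_node s))].

Lemma sim_run_invariant x : sim_valid (sim_run x) -> sim_invariant (sim_run x).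
Proof.
case: run_T => T_root _ l_root _.
elim/last_ind: x => [_|x n IH].
  split => /=; [|by move=> i; rewrite ltnS ltn0|by []|by rewrite l_root].
  by split => //; split => // i; rewrite ltnS ltn0.
rewrite sim_run_rcons; case: (sim_run x) IH => h y valid IH /=.
case/and4P => /IH [/= h_play h_cons y_node h_last] q'_c' /classicbP child_node.
have [c' f_disjunct _] := dup_disjunct_reply h_play y_node h_last.
rewrite f_disjunct /= in q'_c'.
have [round_play round_cons [p' f_state _]] :=
  dup_state_reply h_play h_cons y_node h_last f_disjunct q'_c'.
rewrite f_state => /eqP /= child_label.
by split => //=; rewrite /play_round last_rcons f_state size_rcons child_label.
Qed.

(* Positions 4|x|, ..., 4|x| + 3 form the round played at node x. *)
Lemma alt_state_round x n r :
  sim_valid (sim_run (rcons x n)) -> r < 4 ->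
  alt_state (nth ip (sim_play (sim_run (rcons x n))) (4 * size x + r))
  = l (sim_node (sim_run x)).
Proof.
move=> valid hr; have := sim_run_invariant (sim_valid_rcons valid).
have size_x := size_sim_play x.
move: valid; rewrite sim_run_rcons; case: (sim_run x) size_x => h y ok size_x _.
case=> /= h_play h_cons y_node h_last.
have [c' f_disjunct _] := dup_disjunct_reply h_play y_node h_last.
rewrite /play_round /play_state f_disjunct /play_disjunct -!cats1 -!catA nth_cat /= size_x.
case: r hr => [|r] hr.
  rewrite addn0 addn1 ltnSn.
  have -> : 4 * size x = (size h).-1 by rewrite size_x addn1.
  by rewrite nth_last h_last.
have -> : (4 * size x + r.+1 < 4 * size x + 1) = false by apply/negbTE; lia.
have -> : 4 * size x + r.+1 - (4 * size x + 1) = r by lia.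
by case: r hr => [|[|[|r]]] //= _; rewrite h_last.
Qed.

Definition sim_tree (x : seq nat) : Prop := sim_valid (sim_run x).
Definition sim_label (x : seq nat) : Q := dom_state (last ip (sim_play (sim_run x))).

Lemma sim_run_tree : run_tree q0 delta sigma' sim_tree sim_label.
Proof.
split => //; first by move=> x n; apply: sim_valid_rcons.
move=> x; rewrite /sim_tree /sim_label.
have := sim_node_run x; have := @sim_run_invariant x.
case E: (sim_run x) => [h y valid] /= inv node_x valid_x.
have [/= h_play h_cons y_node h_last] := inv valid_x.
have size_y : size y = size x by rewrite node_x size_map.
have [c' f_disjunct c'_delta] := dup_disjunct_reply h_play y_node h_last.
exists c'; first by rewrite -size_y.
move=> q'; split.
- move=> q'_c'.
  have [_ _ [p' f_state]] := dup_state_reply h_play h_cons y_node h_last f_disjunct q'_c'.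
  rewrite inE => /classicbP [m [child_node child_label]].
  exists (pickle (q', m)); rewrite sim_run_rcons E /=.
  rewrite /decode_state /decode_index pickleK valid_x f_disjunct /= q'_c' f_state /=.
  rewrite child_label eqxx andbT /play_round last_rcons f_state; split => //.
  exact/classicbP.
- case=> n; rewrite sim_run_rcons E /= => -[/and4P[_ q'_c' _ _]].
  rewrite f_disjunct /= in q'_c'.
  have [_ _ [p' f_state _]] := dup_state_reply h_play h_cons y_node h_last f_disjunct q'_c'.
  by rewrite /play_round last_rcons f_state => <-.
Qed.

Lemma sim_play_cat x z : exists tl, sim_play (sim_run (x ++ z)) = sim_play (sim_run x) ++ tl.
Proof.
elim/last_ind: z => [|z n [tl IH]]; first by exists [::]; rewrite !cats0.
rewrite -rcons_cat sim_run_rcons; case: (sim_run (x ++ z)) IH => [h y ok] /= ->.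
by rewrite /play_round /play_state /play_disjunct -!cats1 -!catA; eexists.
Qed.

Lemma mkseq_prefix (b : nat -> nat) k K : k <= K -> exists z, mkseq b K = mkseq b k ++ z.
Proof.
move=> /subnKC <-; elim: (K - k) => [|d [z IH]]; first by exists [::]; rewrite addn0 cats0.
by rewrite addnS mkseqS IH rcons_cat; eexists.
Qed.

Section Branch.

Variable b : nat -> nat.
Hypothesis b_branch : forall k, sim_tree (branch_node b k).

Let branch_play (k : nat) : seq (pos Q) := sim_play (sim_run (mkseq b k)).

Let size_branch_play k : size (branch_play k) = 4 * k + 1.
Proof. by rewrite /branch_play size_sim_play size_mkseq. Qed.

Let branch_play_prefix k K : k <= K -> exists tl, branch_play K = branch_play k ++ tl.
Proof. by rewrite /branch_play => /(mkseq_prefix b) [z ->]; apply: sim_play_cat. Qed.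

(* The plays along the branch extend each other; their limit is [branch_rho]. *)
Definition branch_rho (i : nat) : pos Q := nth ip (branch_play i) i.

Let branch_rhoE i K : i < 4 * K + 1 -> branch_rho i = nth ip (branch_play K) i.
Proof.
move=> hi; rewrite /branch_rho; case: (leqP i K) => hiK.
  by have [tl ->] := branch_play_prefix hiK; rewrite nth_cat size_branch_play ifT //; lia.
by have [tl ->] := branch_play_prefix (ltnW hiK); rewrite nth_cat size_branch_play hi.
Qed.

Let branch_invariant k : sim_invariant (sim_run (mkseq b k)).
Proof. exact: sim_run_invariant (b_branch k). Qed.

Lemma branch_rho_play : is_play q0 delta sigma sigma' branch_rho.
Proof.
split=> // k; rewrite (branch_rhoE (K := k.+1)) ?(branch_rhoE (i := k.+1) (K := k.+1)); try lia.
case: (branch_invariant k.+1) => [[_ [_ moves]] _ _ _]; apply: moves.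
by rewrite -/(branch_play k.+1) size_branch_play; lia.
Qed.

Lemma branch_rho_consistent : consistent f branch_rho.
Proof.
move=> k owned; case: (branch_invariant k.+1) => _ cons _ _.
have hk : k.+1 < size (branch_play k.+1) by rewrite size_branch_play; lia.
rewrite (branch_rhoE (K := k.+1)); last lia.
rewrite cons //; last by rewrite -(branch_rhoE (K := k.+1)) //; lia.
congr f; apply: (@eq_from_nth _ ip); first by rewrite size_mkseq size_take hk.
move=> i; rewrite size_takel ?(ltnW hk) // => hi.
by rewrite nth_take // nth_mkseq // (branch_rhoE (K := k.+1)) //; lia.
Qed.

Lemma branch_rho_dom k : dom_state (branch_rho (4 * k)) = sim_label (branch_node b k).
Proof.
rewrite (branch_rhoE (K := k)); last lia.
have -> : 4 * k = (size (branch_play k)).-1 by rewrite size_branch_play addn1.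
by rewrite nth_last.
Qed.

Lemma branch_rho_alt k r : r < 4 ->
  alt_state (branch_rho (4 * k + r)) = l (mkseq (decode_index \o b) k).
Proof.
move=> hr; rewrite (branch_rhoE (K := k.+1)); last lia.
have -> : 4 * k = 4 * size (mkseq b k) by rewrite size_mkseq.
rewrite /branch_play mkseqS alt_state_round //; first by rewrite sim_node_run /mkseq -map_comp.
by have := b_branch k.+1; rewrite /sim_tree /branch_node mkseqS.
Qed.

End Branch.

Lemma sim_run_accepting : run_accepting F sim_tree sim_label.
Proof.
move=> b b_branch.
have T_branch k : T (mkseq (decode_index \o b) k).
  by case: (sim_run_invariant (b_branch k)) => _ _; rewrite sim_node_run /mkseq map_comp.
have [N l_notF] := accepting_T T_branch.
exists N => k Nk; apply/negP => label_F.
have dom_F : dom_state (branch_rho b (4 * k)) \in F by rewrite branch_rho_dom.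
have [k' kk' alt_F] := f_winning (branch_rho_play b_branch) (branch_rho_consistent b_branch) dom_F.
have k'E : k' = 4 * (k' %/ 4) + k' %% 4 by rewrite {1}(divn_eq k' 4) mulnC.
move: alt_F; rewrite k'E branch_rho_alt ?ltn_mod //; apply/negP/l_notF.
by rewrite leq_divRL //; lia.
Qed.

End Simulation.

Lemma aca_accepts_delay (AP Q : finType) (q0 : Q) (delta : Q -> {set AP} -> {set {set Q}})
  (F : {set Q}) (sigma sigma' : word AP) :
  aca_accepts q0 delta F sigma -> dup_wins_game q0 delta F sigma sigma' ->
  aca_accepts q0 delta F sigma'.
Proof.
move=> [T [l [run_T accepting_T]]] [f [f_strategy f_winning]].
exists (sim_tree q0 T l f), (sim_label q0 T l f); split.
- exact: sim_run_tree run_T f_strategy.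
- exact: sim_run_accepting run_T accepting_T f_strategy f_winning.
Qed.

Theorem lemma6 (I O : finType) (phi : ltl ((I + O)%type))
  (Q : finType) (q0 : Q) (delta : Q -> {set (I + O)%type} -> {set {set Q}}) (F : {set Q}) :
  aca_wf delta ->
  (forall sigma : word ((I + O)%type), aca_accepts q0 delta F sigma <-> ltl_sat sigma phi) ->
  (exists s : seq {set I} -> {set O}, finite_state s /\ winning phi s) ->
  forall s : seq {set I} -> {set O},
    finite_state s -> delay_dominant q0 delta F s -> winning phi s.
Proof.
move=> _ lang [t [t_finite t_winning]] s _ s_dominant gamma.
apply/lang/(aca_accepts_delay (sigma := comp t gamma)).
- exact/lang/t_winning.
- exact: s_dominant.
Qed.
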